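(* Let $a>0$, $b\ge0$, $\eta>0$, $\alpha>0$. Let $(r_t)_{t\ge0}$ be real numbers satisfying $r_{t+1}\le r_t-\alpha\frac a2r_t^2+\alpha\frac b\eta$ for all $t\ge0$, and define $\rho_0=r_0$, $\rho_{t+1}=\rho_t-\alpha\frac a2\rho_t^2+\alpha\frac b\eta$ for $t\ge0$. If $\alpha\le\frac{1}{a\rho_t}$ (for all $t$), then $\rho_t\ge r_t$ for every $t\ge0$. *)

From Stdlib Require Import Reals.
Open Scope R_scope.

Fixpoint rho_seq (a b eta alpha r0 : R) (t : nat) : R :=
  match t with
  | O => r0
  | S t' => let p := rho_seq a b eta alpha r0 t' in
            p - alpha * (a / 2) * p ^ 2 + alpha * (b / eta)
  end.

(* The map x |-> x - c x^2 + d with c = alpha a / 2 is nondecreasing on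
   (-oo, 1/(2c)] = (-oo, 1/(alpha a)], and the step-size condition keeps every
   rho_t in that half-line.  Hence r_t <= rho_t propagates by induction:
   r_{t+1} <= f(r_t) <= f(rho_t) = rho_{t+1}. *)
From Stdlib Require Import Reals Lra Psatz.
Open Scope R_scope.

(* [1 / 0 = 0] in Rocq, so the bound also excludes [x = 0]. *)
Lemma le_inv_pos (c x : R) : 0 < c -> c <= 1 / x -> 0 < x /\ c * x <= 1.
Proof.
  intros hc h.
  destruct (Rlt_or_le 0 x) as [hx | hx].
  - split; [exact hx |].
    apply Rmult_le_compat_r with (r := x) in h; [| lra].
    unfold Rdiv in h; rewrite Rmult_1_l, Rinv_l in h by lra; exact h.
  - exfalso.
    destruct (Req_dec x 0) as [-> | hx0].
    + unfold Rdiv in h; rewrite Rinv_0 in h; lra.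
    + assert (/ x < 0) by (apply Rinv_lt_0_compat; lra).
      unfold Rdiv in h; lra.
Qed.

Lemma quad_step_le (c d x y : R) :
  0 <= c -> x <= y -> 2 * c * y <= 1 ->
  x - c * x ^ 2 + d <= y - c * y ^ 2 + d.
Proof.
  intros hc hxy hy.
  assert (hcx : c * x <= c * y) by (apply Rmult_le_compat_l; lra).
  assert (hfactor : 0 <= (y - x) * (1 - c * (x + y))) by (apply Rmult_le_pos; lra).
  nra.
Qed.

Theorem lemmaC7 (a b eta alpha : R) (r : nat -> R)
  (ha : 0 < a) (hb : 0 <= b) (heta : 0 < eta) (halpha : 0 < alpha)
  (hr : forall t : nat,
      r (S t) <= r t - alpha * (a / 2) * (r t) ^ 2 + alpha * (b / eta))
  (hstep : forall t : nat, alpha <= 1 / (a * rho_seq a b eta alpha (r 0%nat) t)) :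
  forall t : nat, r t <= rho_seq a b eta alpha (r 0%nat) t.
Proof.
  induction t as [| t IH]; simpl; [lra |].
  set (p := rho_seq a b eta alpha (r 0%nat) t) in *.
  destruct (le_inv_pos alpha (a * p) halpha (hstep t)) as [_ hap].
  apply Rle_trans with (1 := hr t).
  apply quad_step_le; [nra | exact IH | lra].
Qed.
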